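(* Let $\lambda,t_0,t_1\in\mathbb{R}$, let $T:\mathbb{Z}\to\mathbb{R}$ be the $2$-periodic sequence with $T(2j)=t_0$, $T(2j+1)=t_1$, and let $\omega\in\mathbb{R}$ with $\omega/2\pi$ irrational. If $t_0=0$, then the Lyapunov exponent of the periodic coupling AMO model satisfies $L(0)=0$, regardless of the value of $t_1$.
   Context: The periodic coupling AMO model is the family of operators on $\ell^2(\mathbb{Z})$, $(H_\theta u)(n)=u(n+1)+u(n-1)+\lambda T(n)\cos(\theta+n\omega)u(n)$, $\theta\in S^1=\mathbb{R}/2\pi\mathbb{Z}$. For $E\in\mathbb{R}$ and $h\in\{0,1\}$ let $A_E(\theta,h)=\begin{pmatrix}E-\lambda T(h)\cos\theta&-1\\1&0\end{pmatrix}$, and let $B_E(\theta)=A_E(\theta+\omega,1)A_E(\theta,0)$, viewed as a cocycle over the rotation $\theta\mapsto\theta+2\omega$ on $S^1$, with $B_E^m(\theta)=B_E(\theta+2(m-1)\omega)\cdots B_E(\theta+2\omega)B_E(\theta)$. The Lyapunov exponent is $L(E)=\lim_{m\to\infty}\frac{1}{2m}\int_{S^1}\log\|B_E^m(\theta)\|\frac{d\theta}{2\pi}$ (equivalently, the Lyapunov exponent of the one-step cocycle over $S^1\times\mathbb{Z}_2$ with respect to the uniform product measure); in particular $L(E)=0$ iff the exponent of the cocycle $(2\omega,B_E)$ is zero. *)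

From Stdlib Require Import Reals ZArith QArith.
From Coquelicot Require Import Coquelicot.
Open Scope R_scope.

(* 2x2 real matrices ((a,b),(c,d)) = [[a,b],[c,d]] *)
Definition mat2 : Type := ((R * R) * (R * R))%type.

Definition mat2_mul (M N : mat2) : mat2 :=
  let '((a, b), (c, d)) := M in
  let '((e, f), (g, h)) := N in
  ((a * e + b * g, a * f + b * h), (c * e + d * g, c * f + d * h)).

Definition mat2_id : mat2 := ((1, 0), (0, 1)).

Definition mat2_apply_norm (M : mat2) (x y : R) : R :=
  let '((a, b), (c, d)) := M in
  sqrt ((a * x + b * y) ^ 2 + (c * x + d * y) ^ 2).

Definition opnorm (M : mat2) : R :=
  real (Lub_Rbar (fun r => exists x y : R,
          x ^ 2 + y ^ 2 = 1 /\ r = mat2_apply_norm M x y)).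

Definition Tper (t0 t1 : R) (n : Z) : R := if Z.even n then t0 else t1.

Definition A_E (lam : R) (T : Z -> R) (E theta : R) (h : Z) : mat2 :=
  ((E - lam * T h * cos theta, -1), (1, 0)).

Definition B_E (lam omega : R) (T : Z -> R) (E theta : R) : mat2 :=
  mat2_mul (A_E lam T E (theta + omega) 1%Z) (A_E lam T E theta 0%Z).

Fixpoint B_E_iter (lam omega : R) (T : Z -> R) (E : R) (m : nat) (theta : R)
  : mat2 :=
  match m with
  | O => mat2_id
  | S k => mat2_mul (B_E lam omega T E (theta + 2 * INR k * omega))
                    (B_E_iter lam omega T E k theta)
  end.

Definition lyap_term (lam omega : R) (T : Z -> R) (E : R) (m : nat) : R :=
  / (2 * INR m) *
  (RInt (fun theta => ln (opnorm (B_E_iter lam omega T E m theta))) 0 (2 * PI)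
   / (2 * PI)).

Definition lyapunov_is (lam omega : R) (T : Z -> R) (E l : R) : Prop :=
  is_lim_seq (lyap_term lam omega T E) l.

From Stdlib Require Import Reals ZArith QArith Lra.
From Coquelicot Require Import Coquelicot.
Open Scope R_scope.

(* At E = 0 and t0 = 0 the even-site matrix is the rotation [[0,-1],[1,0]], and
   B_E(theta) = -[[1, s(theta)], [0, 1]] is minus a shear.  Shears compose by
   adding their parameters, so B_E^m(theta) = (-1)^m [[1, S_m(theta)], [0, 1]]
   with S_m a sum of m cosines, |S_m| <= m |lambda t1|.  Hence
   1 <= ||B_E^m|| <= 1 + m |lambda t1|, and (1/2m) log ||B_E^m|| is squeezed
   between 0 and O(log m / m). *)

Lemma Rabs_le_unit_circle x y : x ^ 2 + y ^ 2 = 1 -> Rabs x <= 1.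
Proof. intros Hxy. apply Rabs_le. split; nra. Qed.

Lemma sqrt_le_pow2 X Y : 0 <= Y -> X <= Y ^ 2 -> sqrt X <= Y.
Proof. intros HY HX. rewrite <- (sqrt_pow2 Y HY). now apply sqrt_le_1_alt. Qed.

Lemma sqrt_sum_sq_le_abs u v : sqrt (u ^ 2 + v ^ 2) <= Rabs u + Rabs v.
Proof.
  pose proof (Rabs_pos u); pose proof (Rabs_pos v).
  apply sqrt_le_pow2; [lra |].
  rewrite <- (pow2_abs u), <- (pow2_abs v). nra.
Qed.

Lemma sqrt_sum_sq_shift a b d :
  sqrt ((a + d) ^ 2 + b ^ 2) <= sqrt (a ^ 2 + b ^ 2) + Rabs d.
Proof.
  set (r := sqrt (a ^ 2 + b ^ 2)).
  assert (Hr2 : r ^ 2 = a ^ 2 + b ^ 2).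
  { unfold r. rewrite <- Rsqr_pow2. apply Rsqr_sqrt. nra. }
  assert (Har : Rabs a <= r).
  { unfold r. rewrite <- (sqrt_pow2 (Rabs a) (Rabs_pos a)).
    apply sqrt_le_1_alt. rewrite pow2_abs. nra. }
  assert (Had : a * d <= Rabs a * Rabs d) by (rewrite <- Rabs_mult; apply Rle_abs).
  assert (0 <= r) by apply sqrt_pos. pose proof (Rabs_pos d).
  assert (Hd2 : Rabs d ^ 2 = d ^ 2) by apply pow2_abs.
  assert (Rabs a * Rabs d <= r * Rabs d) by (apply Rmult_le_compat_r; assumption).
  apply sqrt_le_pow2; [lra |]. nra.
Qed.

Lemma mat2_apply_norm_le_entries a b c d x y : x ^ 2 + y ^ 2 = 1 ->
  mat2_apply_norm ((a, b), (c, d)) x y <= Rabs a + Rabs b + Rabs c + Rabs d.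
Proof.
  intros Hxy.
  assert (Hrow : forall p q, Rabs (p * x + q * y) <= Rabs p + Rabs q).
  { intros p q.
    pose proof (Rabs_le_unit_circle x y Hxy).
    assert (Rabs y <= 1) by (apply (Rabs_le_unit_circle y x); lra).
    pose proof (Rabs_pos p); pose proof (Rabs_pos q).
    eapply Rle_trans; [apply Rabs_triang |]. rewrite !Rabs_mult. nra. }
  eapply Rle_trans; [apply sqrt_sum_sq_le_abs |].
  pose proof (Hrow a b); pose proof (Hrow c d). lra.
Qed.

Lemma opnorm_is_lub M : is_lub (fun r => exists x y : R,
  x ^ 2 + y ^ 2 = 1 /\ r = mat2_apply_norm M x y) (opnorm M).
Proof.
  destruct M as [[a b] [c d]]. unfold opnorm.
  destruct (Lub_Rbar_correct (fun r => exists x y : R,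
    x ^ 2 + y ^ 2 = 1 /\ r = mat2_apply_norm ((a, b), (c, d)) x y)) as [Hub Hlub].
  assert (Hfin := Hlub (Finite (Rabs a + Rabs b + Rabs c + Rabs d))).
  assert (Hne := Hub (mat2_apply_norm ((a, b), (c, d)) 1 0)).
  destruct (Lub_Rbar _) as [l | |]; simpl in *.
  - split.
    + intros r Hr. exact (Hub r Hr).
    + intros B HB. apply (Hlub (Finite B)). intros r Hr. exact (HB r Hr).
  - exfalso. apply Hfin. intros r [x [y [Hxy ->]]].
    now apply mat2_apply_norm_le_entries.
  - exfalso. apply Hne. exists 1, 0. split; [ring | reflexivity].
Qed.

Lemma mat2_apply_norm_le_opnorm M x y :
  x ^ 2 + y ^ 2 = 1 -> mat2_apply_norm M x y <= opnorm M.
Proof. intros Hxy. apply (proj1 (opnorm_is_lub M)). now exists x, y. Qed.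

Lemma opnorm_le M B :
  (forall x y, x ^ 2 + y ^ 2 = 1 -> mat2_apply_norm M x y <= B) -> opnorm M <= B.
Proof.
  intros HB. apply (proj2 (opnorm_is_lub M)). intros r [x [y [Hxy ->]]]. auto.
Qed.

Lemma opnorm_ext M N :
  (forall x y, x ^ 2 + y ^ 2 = 1 -> mat2_apply_norm M x y = mat2_apply_norm N x y) ->
  opnorm M = opnorm N.
Proof.
  intros HMN. apply Rle_antisym; apply opnorm_le; intros x y Hxy.
  - rewrite HMN by exact Hxy. now apply mat2_apply_norm_le_opnorm.
  - rewrite <- HMN by exact Hxy. now apply mat2_apply_norm_le_opnorm.
Qed.

Definition shear (s : R) : mat2 := ((1, s), (0, 1)).

Lemma opnorm_shear_ge1 s : 1 <= opnorm (shear s).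
Proof.
  assert (He1 : mat2_apply_norm (shear s) 1 0 = 1).
  { unfold mat2_apply_norm, shear.
    replace ((1 * 1 + s * 0) ^ 2 + (0 * 1 + 1 * 0) ^ 2) with 1 by ring. apply sqrt_1. }
  rewrite <- He1 at 1. apply mat2_apply_norm_le_opnorm. ring.
Qed.

Lemma opnorm_shear_lipschitz s s' :
  opnorm (shear s) <= opnorm (shear s') + Rabs (s - s').
Proof.
  apply opnorm_le. intros x y Hxy.
  assert (Hy : Rabs y <= 1) by (apply (Rabs_le_unit_circle y x); lra).
  assert (Hshift : mat2_apply_norm (shear s) x y
                   <= mat2_apply_norm (shear s') x y + Rabs ((s - s') * y)).
  { unfold mat2_apply_norm, shear.
    replace (1 * x + s * y) with ((1 * x + s' * y) + (s - s') * y) by ring.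
    apply sqrt_sum_sq_shift. }
  pose proof (mat2_apply_norm_le_opnorm (shear s') x y Hxy).
  pose proof (Rabs_pos (s - s')).
  rewrite Rabs_mult in Hshift. nra.
Qed.

Lemma opnorm_shear_le s : opnorm (shear s) <= 1 + Rabs s.
Proof.
  assert (Hid : opnorm (shear 0) <= 1).
  { apply opnorm_le. intros x y Hxy. unfold mat2_apply_norm, shear.
    apply sqrt_le_pow2; nra. }
  pose proof (opnorm_shear_lipschitz s 0) as Hlip. rewrite Rminus_0_r in Hlip. lra.
Qed.

Lemma continuity_pt_opnorm_shear s : continuity_pt (fun s => opnorm (shear s)) s.
Proof.
  intros eps Heps. exists eps. split; [exact Heps |].
  intros s' [_ Hs']. simpl in *. unfold R_dist in *.
  apply Rabs_lt_between. split.
  - pose proof (opnorm_shear_lipschitz s s') as Hlip. rewrite Rabs_minus_sym in Hlip. lra.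
  - pose proof (opnorm_shear_lipschitz s' s). lra.
Qed.

Section ZeroEvenCoupling.

Variables lam t1 omega : R.

Fixpoint shear_coeff (m : nat) (th : R) : R :=
  match m with
  | O => 0
  | S k => shear_coeff k th - lam * t1 * cos (th + 2 * INR k * omega + omega)
  end.

Lemma B_E_iter_shear m th :
  B_E_iter lam omega (Tper 0 t1) 0 m th =
  (((-1) ^ m, (-1) ^ m * shear_coeff m th), (0, (-1) ^ m)).
Proof.
  induction m as [| m IHm]; simpl.
  - unfold mat2_id. f_equal; f_equal; ring.
  - rewrite IHm. unfold B_E, A_E, Tper, mat2_mul. simpl. f_equal; f_equal; ring.
Qed.

Lemma opnorm_B_E_iter m th :
  opnorm (B_E_iter lam omega (Tper 0 t1) 0 m th) = opnorm (shear (shear_coeff m th)).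
Proof.
  rewrite B_E_iter_shear. apply opnorm_ext. intros x y _.
  assert (Hsign : ((-1) ^ m) ^ 2 = 1).
  { rewrite <- pow_mult, Nat.mul_comm, pow_mult. replace ((-1) ^ 2) with 1 by ring.
    apply pow1. }
  unfold mat2_apply_norm, shear. f_equal.
  transitivity (((-1) ^ m) ^ 2 * ((1 * x + shear_coeff m th * y) ^ 2 + (0 * x + 1 * y) ^ 2)).
  - ring.
  - rewrite Hsign. ring.
Qed.

Lemma shear_coeff_bound m th : Rabs (shear_coeff m th) <= INR m * Rabs (lam * t1).
Proof.
  induction m as [| m IHm]; simpl shear_coeff.
  - rewrite Rabs_R0. simpl. lra.
  - rewrite S_INR. unfold Rminus. eapply Rle_trans; [apply Rabs_triang |].
    rewrite Rabs_Ropp, Rabs_mult.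
    assert (Rabs (cos (th + 2 * INR m * omega + omega)) <= 1).
    { apply Rabs_le. apply COS_bound. }
    pose proof (Rabs_pos (lam * t1)). nra.
Qed.

Lemma continuity_pt_shear_coeff m th : continuity_pt (shear_coeff m) th.
Proof.
  induction m as [| m IHm]; simpl.
  - apply continuity_pt_const. intros a b; reflexivity.
  - apply (continuity_pt_minus (shear_coeff m)
      (fun th => lam * t1 * cos (th + 2 * INR m * omega + omega))); [exact IHm | reg].
Qed.

Lemma ex_RInt_ln_opnorm_B_E_iter m a b :
  ex_RInt (fun th => ln (opnorm (B_E_iter lam omega (Tper 0 t1) 0 m th))) a b.
Proof.
  apply (ex_RInt_ext (fun th => ln (opnorm (shear (shear_coeff m th))))).
  { intros th _. now rewrite opnorm_B_E_iter. }
  apply (@ex_RInt_continuous R_CompleteNormedModule). intros th _.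
  apply (continuous_comp (fun th => opnorm (shear (shear_coeff m th))) ln).
  - apply continuity_pt_filterlim.
    apply (continuity_pt_comp (shear_coeff m) (fun s => opnorm (shear s))).
    + apply continuity_pt_shear_coeff.
    + apply continuity_pt_opnorm_shear.
  - apply continuous_ln. pose proof (opnorm_shear_ge1 (shear_coeff m th)). lra.
Qed.

End ZeroEvenCoupling.

Lemma RInt_mean_bounds (f : R -> R) a b lo hi :
  a < b -> ex_RInt f a b -> (forall x, a < x < b -> lo <= f x <= hi) ->
  lo <= RInt f a b / (b - a) <= hi.
Proof.
  intros Hab Hf Hbd.
  assert (Hlo : RInt (fun _ => lo) a b <= RInt f a b).
  { apply RInt_le; [lra | apply ex_RInt_const | exact Hf |].
    intros x Hx. apply Hbd, Hx. }
  assert (Hhi : RInt f a b <= RInt (fun _ => hi) a b).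
  { apply RInt_le; [lra | exact Hf | apply ex_RInt_const |].
    intros x Hx. apply Hbd, Hx. }
  rewrite !RInt_const in Hlo, Hhi. unfold scal in Hlo, Hhi. simpl in Hlo, Hhi.
  unfold mult in Hlo, Hhi. simpl in Hlo, Hhi.
  split.
  - apply Rmult_le_reg_r with (b - a); [lra |].
    unfold Rdiv. rewrite Rmult_assoc, Rinv_l by lra. lra.
  - apply Rmult_le_reg_r with (b - a); [lra |].
    unfold Rdiv. rewrite Rmult_assoc, Rinv_l by lra. lra.
Qed.

Lemma lyap_term_bounds lam t1 omega m : (1 <= m)%nat ->
  0 <= lyap_term lam omega (Tper 0 t1) 0 m
    <= ln ((1 + Rabs (lam * t1)) * INR m) / (2 * INR m).
Proof.
  intros Hm. set (K := Rabs (lam * t1)).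
  assert (HK : 0 <= K) by apply Rabs_pos.
  assert (Hm1 : 1 <= INR m) by (apply (le_INR 1); exact Hm).
  assert (HPI := PI_RGT_0).
  assert (Hmean : 0 <= RInt (fun th => ln (opnorm (B_E_iter lam omega (Tper 0 t1) 0 m th)))
                              0 (2 * PI) / (2 * PI - 0)
                     <= ln ((1 + K) * INR m)).
  { apply RInt_mean_bounds; [lra | apply ex_RInt_ln_opnorm_B_E_iter |].
    intros th _. rewrite opnorm_B_E_iter.
    pose proof (opnorm_shear_ge1 (shear_coeff lam t1 omega m th)).
    split.
    - rewrite <- ln_1. apply ln_le; lra.
    - apply ln_le; [lra |].
      pose proof (opnorm_shear_le (shear_coeff lam t1 omega m th)).
      pose proof (shear_coeff_bound lam t1 omega m th) as Hcoeff. fold K in Hcoeff. nra. }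
  rewrite Rminus_0_r in Hmean.
  unfold lyap_term.
  set (mean := RInt _ 0 (2 * PI) / (2 * PI)) in *.
  unfold Rdiv. rewrite (Rmult_comm (ln _)).
  assert (0 < / (2 * INR m)) by (apply Rinv_0_lt_compat; lra).
  split; [apply Rmult_le_pos | apply Rmult_le_compat_l]; lra.
Qed.

Lemma is_lim_seq_ln_mul_div c : 0 < c ->
  is_lim_seq (fun n => ln (c * INR n) / (2 * INR n)) 0.
Proof.
  intros Hc.
  apply (is_lim_seq_ext_loc (fun n => c / 2 * (ln (c * INR n) / (c * INR n)))).
  { exists 1%nat. intros n Hn. assert (1 <= INR n) by (apply (le_INR 1); exact Hn).
    field. lra. }
  replace (Finite 0) with (Rbar_mult (c / 2) 0) by (simpl; f_equal; ring).
  apply is_lim_seq_scal_l.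
  apply (is_lim_comp_seq (fun y => ln y / y) (fun n => c * INR n) p_infty);
    [exact is_lim_div_ln_p | now exists 0%nat |].
  replace p_infty with (Rbar_mult c p_infty).
  - apply is_lim_seq_scal_l, is_lim_seq_INR.
  - simpl. destruct (Rle_dec 0 c) as [Hc0 | Hc0]; [| lra].
    destruct (Rle_lt_or_eq_dec 0 c Hc0); [reflexivity | lra].
Qed.

Theorem mainTheorem2 (lam t0 t1 omega : R)
  (Hirr : ~ exists q : Q, omega / (2 * PI) = Q2R q)
  (Ht0 : t0 = 0) :
  lyapunov_is lam omega (Tper t0 t1) 0 0.
Proof.
  subst t0. unfold lyapunov_is.
  apply is_lim_seq_le_le_loc with (u := fun _ => 0)
    (w := fun m => ln ((1 + Rabs (lam * t1)) * INR m) / (2 * INR m)).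
  - exists 1%nat. apply lyap_term_bounds.
  - apply is_lim_seq_const.
  - apply is_lim_seq_ln_mul_div. pose proof (Rabs_pos (lam * t1)). lra.
Qed.
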